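(* The equations \[ \alpha u=k\frac{f_0g_0f_3}{f_0g_0+g_0f_3+f_3g_3}+\ell\frac{f_2g_2f_5}{f_2g_2+g_2f_5+f_5g_5}+m\frac{f_4g_4f_1}{f_4g_4+g_4f_1+f_1g_1}, \] \[ \beta v=k\frac{g_0f_3g_3}{f_0g_0+g_0f_3+f_3g_3}+\ell\frac{g_2f_5g_5}{f_2g_2+g_2f_5+f_5g_5}+m\frac{g_4f_1g_1}{f_4g_4+g_4f_1+f_1g_1} \] are well defined equations for the point $\mathfrak{z}\in V(\mathcal{T}\mathcal{L})$, i.e. they are invariant under the shift $(k,\ell,m)\mapsto(k+n,\ell+n,m+n)$, provided the equations $\frac{u(\mathfrak{z}_2)-u(\mathfrak{z}_1)}{u(\mathfrak{z}_3)-u(\mathfrak{z}_2)}=\frac{v(\mathfrak{z}_3)-v(\mathfrak{z}_2)}{v(\mathfrak{z}_1)-v(\mathfrak{z}_3)}$ hold on all positively oriented elementary triangles.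
   Context: On the regular triangular lattice with vertices $\mathfrak{z}=k+\ell\omega+m\omega^2$ ($\omega=e^{2\pi i/3}$; the triples $(k,\ell,m)$ and $(k+n,\ell+n,m+n)$ represent the same vertex), $u,v$ are complex functions on vertices. For a vertex $\mathfrak{z}$ with chosen representative $(k,\ell,m)$, $u=u(\mathfrak{z})$, $v=v(\mathfrak{z})$, and with edges $\mathfrak{e}_0=(\mathfrak{z},\mathfrak{z}+1)$, $\mathfrak{e}_2=(\mathfrak{z},\mathfrak{z}+\omega)$, $\mathfrak{e}_4=(\mathfrak{z},\mathfrak{z}+\omega^2)$, $\mathfrak{e}_1=(\mathfrak{z}-\omega^2,\mathfrak{z})$, $\mathfrak{e}_3=(\mathfrak{z}-1,\mathfrak{z})$, $\mathfrak{e}_5=(\mathfrak{z}-\omega,\mathfrak{z})$, set $f_j=u(\text{end of }\mathfrak{e}_j)-u(\text{start of }\mathfrak{e}_j)$, $g_j$ likewise with $v$. A positively oriented elementary triangle has consecutive vertices $\mathfrak{z}_1,\mathfrak{z}_2,\mathfrak{z}_3$ with $\mathfrak{z}_2-\mathfrak{z}_1,\mathfrak{z}_3-\mathfrak{z}_2,\mathfrak{z}_1-\mathfrak{z}_3\in\{1,\omega,\omega^2\}$. $\alpha,\beta\in\mathbb C$ are constants. *)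

From mathcomp Require Import all_boot all_algebra.
From mathcomp Require Import reals complex.
Set Implicit Arguments. Unset Strict Implicit. Unset Printing Implicit Defensive.
Import GRing.Theory Num.Theory.
Local Open Scope ring_scope.

(* Vertices of the triangular lattice: the pair (a, b) : int * int stands for
   the point a + b*omega.  Then 1 = (1,0), omega = (0,1), omega^2 = -1-omega = (-1,-1). *)
Definition vtx := (int * int)%type.
Definition vadd (z w : vtx) : vtx := (z.1 + w.1, z.2 + w.2).
Definition vsub (z w : vtx) : vtx := (z.1 - w.1, z.2 - w.2).
Definition v_one : vtx := (1, 0).
Definition v_om : vtx := (0, 1).
Definition v_om2 : vtx := (-1, -1).

(* The vertex k + l*omega + m*omega^2 = (k - m) + (l - m)*omega. *)
Definition vtx_of (k l m : int) : vtx := (k - m, l - m).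

Definition is_step (d : vtx) : Prop := d = v_one \/ d = v_om \/ d = v_om2.

Definition pos_triangle (z1 z2 z3 : vtx) : Prop :=
  is_step (vsub z2 z1) /\ is_step (vsub z3 z2) /\ is_step (vsub z1 z3).

Section Lattice.
Variable R : realType.
Implicit Types (u v : vtx -> R[i]).

(* The triangle equation (u(z2)-u(z1))/(u(z3)-u(z2)) = (v(z3)-v(z2))/(v(z1)-v(z3)),
   together with the nonvanishing of its denominators (so that it is meaningful). *)
Definition triangle_eq u v (z1 z2 z3 : vtx) : Prop :=
  [/\ u z3 - u z2 != 0, v z1 - v z3 != 0 &
      (u z2 - u z1) / (u z3 - u z2) = (v z3 - v z2) / (v z1 - v z3)].

(* f_j for the edges e_j at the vertex z (w = u or v) *)
Definition edge_diff (w : vtx -> R[i]) (z : vtx) (j : nat) : R[i] :=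
  match j with
  | 0 => w (vadd z v_one) - w z
  | 1 => w z - w (vsub z v_om2)
  | 2 => w (vadd z v_om) - w z
  | 3 => w z - w (vsub z v_one)
  | 4 => w (vadd z v_om2) - w z
  | _ => w z - w (vsub z v_om)
  end.

Definition denom u v z (a b : nat) : R[i] :=
  let f := edge_diff u z in let g := edge_diff v z in
  f a * g a + g a * f b + f b * g b.

Definition fracU u v z (a b : nat) : R[i] :=
  let f := edge_diff u z in let g := edge_diff v z in
  f a * g a * f b / denom u v z a b.

Definition fracV u v z (a b : nat) : R[i] :=
  let f := edge_diff u z in let g := edge_diff v z in
  g a * f b * g b / denom u v z a b.

(* right-hand sides of the two equations at z, computed with representative (k,l,m) *)
Definition rhsU u v (k l m : int) : R[i] :=
  let z := vtx_of k l m in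
  k%:~R * fracU u v z 0 3 + l%:~R * fracU u v z 2 5 + m%:~R * fracU u v z 4 1.

Definition rhsV u v (k l m : int) : R[i] :=
  let z := vtx_of k l m in
  k%:~R * fracV u v z 0 3 + l%:~R * fracV u v z 2 5 + m%:~R * fracV u v z 4 1.

End Lattice.

From mathcomp Require Import all_boot all_algebra.
From mathcomp Require Import reals complex.
From mathcomp Require Import zify ring.
Set Implicit Arguments. Unset Strict Implicit. Unset Printing Implicit Defensive.
Import GRing.Theory Num.Theory.
Local Open Scope ring_scope.

(* Shifting (k, l, m) by n adds n times the sum of the three fractions to each
   right-hand side, so both sums must vanish.  Write f_j, g_j for the edge
   differences at z and P_j = f_j g_j.  Cleared of denominators, the triangle
   equations on the six triangles around z read f_j g_i = -(P_i + P_j) for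
   adjacent edges e_i, e_j with i even and j odd.  Three consecutive relations
   factor each denominator, e.g. f_0 g_0 + g_0 f_3 + f_3 g_3 = (f_1 - f_3)(g_2 - g_0),
   and two consecutive ones give P_2 - P_0 = f_1 (g_0 - g_2).  The u-sum thus
   becomes a cyclic sum that vanishes because the three differences
   P_2 - P_0, P_4 - P_2, P_0 - P_4 add up to zero; the v-sum is the same
   identity with the roles of f and g exchanged. *)

Lemma cyclic_sum_eq0 (F : fieldType) (a1 a2 a3 b1 b2 b3 Q1 Q2 Q3 : F) :
  (a1 - a2) * (b2 - b1) != 0 -> (a2 - a3) * (b3 - b2) != 0 ->
  (a3 - a1) * (b1 - b3) != 0 ->
  Q2 = Q1 + a1 * (b1 - b2) -> Q3 = Q2 + a2 * (b2 - b3) ->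
  Q1 = Q3 + a3 * (b3 - b1) ->
  Q1 * a2 / ((a1 - a2) * (b2 - b1)) + Q2 * a3 / ((a2 - a3) * (b3 - b2))
    + Q3 * a1 / ((a3 - a1) * (b1 - b3)) = 0.
Proof.
rewrite !mulf_eq0 !negb_or => /andP[a12 b21] /andP[a23 b32] /andP[a31 b13].
move=> eQ2 eQ3 eQ1.
have increments_sum0 : a1 * (b1 - b2) + a2 * (b2 - b3) + a3 * (b3 - b1) = 0.
  by apply: (addrI Q1); rewrite addr0 {2}eQ1 eQ3 eQ2; ring.
have a3b3E : a3 * b3 = a3 * b1 - a1 * (b1 - b2) - a2 * (b2 - b3).
  by apply: subr0_eq; rewrite -increments_sum0; ring.
(* Eliminating Q2, Q3 and a3 * b3 leaves a rational function that is identically 0. *)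
by field: eQ2 eQ3 a3b3E; rewrite a12 b21 a23 b32 a31 b13.
Qed.

Lemma star_denomE (F : comPzRingType) (p0 p1 p2 p3 a a' b b' : F) :
  a * b = - (p0 + p1) -> a * b' = - (p2 + p1) -> a' * b' = - (p2 + p3) ->
  p0 + b * a' + p3 = (a - a') * (b' - b).
Proof. by move=> e1 e2 e3; rewrite mulrBl !mulrBr e1 e2 e3; ring. Qed.

Section Star.
(* P_j, a_i, b_i stand for f_j g_j, f_(2i-1) and g_(2i-2) at a vertex. *)
Variables (F : fieldType) (P0 P1 P2 P3 P4 P5 a1 a2 a3 b1 b2 b3 : F).
Hypotheses (E0 : a1 * b1 = - (P0 + P1)) (E1 : a1 * b2 = - (P2 + P1))
  (E2 : a2 * b2 = - (P2 + P3)) (E3 : a2 * b3 = - (P4 + P3))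
  (E4 : a3 * b3 = - (P4 + P5)) (E5 : a3 * b1 = - (P0 + P5)).

Lemma star_sumU_eq0 :
  P0 + b1 * a2 + P3 != 0 -> P2 + b2 * a3 + P5 != 0 -> P4 + b3 * a1 + P1 != 0 ->
  P0 * a2 / (P0 + b1 * a2 + P3) + P2 * a3 / (P2 + b2 * a3 + P5)
    + P4 * a1 / (P4 + b3 * a1 + P1) = 0.
Proof.
rewrite (star_denomE E0 E1 E2) (star_denomE E2 E3 E4) (star_denomE E4 E5 E0).
move=> D0 D2 D4; apply: cyclic_sum_eq0 => //; rewrite mulrBr.
- by rewrite E0 E1; ring.
- by rewrite E2 E3; ring.
- by rewrite E4 E5; ring.
Qed.

Lemma star_sumV_eq0 :
  P0 + b1 * a2 + P3 != 0 -> P2 + b2 * a3 + P5 != 0 -> P4 + b3 * a1 + P1 != 0 ->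
  b1 * P3 / (P0 + b1 * a2 + P3) + b2 * P5 / (P2 + b2 * a3 + P5)
    + b3 * P1 / (P4 + b3 * a1 + P1) = 0.
Proof.
rewrite (star_denomE E0 E1 E2) (star_denomE E2 E3 E4) (star_denomE E4 E5 E0).
rewrite -addrA (addrC (b2 * P5 / _)) addrA (mulrC b1) (mulrC b2) (mulrC b3).
rewrite (mulrC (a1 - a2)) (mulrC (a2 - a3)) (mulrC (a3 - a1)) => D0 D2 D4.
apply: cyclic_sum_eq0 => //; rewrite mulrBr.
- by rewrite !(mulrC b2) E1 E2; ring.
- by rewrite !(mulrC b1) E0 E5; ring.
- by rewrite !(mulrC b3) E3 E4; ring.
Qed.

End Star.

Lemma cleared_ratio_eq (F : fieldType) (x1 x2 x3 y1 y2 y3 : F) :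
  [/\ x3 - x2 != 0, y1 - y3 != 0 & (x2 - x1) / (x3 - x2) = (y3 - y2) / (y1 - y3)] ->
  (x3 - x2) * (y1 - y3) = - ((x1 - x3) * (y1 - y3) + (x3 - x2) * (y3 - y2)).
Proof.
case=> nx ny /eqP; rewrite eqr_div // => /eqP cross.
apply: subr0_eq.
transitivity ((y3 - y2) * (x3 - x2) - (x2 - x1) * (y1 - y3)); first by ring.
by rewrite cross subrr.
Qed.

Lemma intr_shift_sum (R : comPzRingType) (k l m n : int) (x y w : R) :
  (k + n)%:~R * x + (l + n)%:~R * y + (m + n)%:~R * w
    = k%:~R * x + l%:~R * y + m%:~R * w + n%:~R * (x + y + w).
Proof. by rewrite !intrD; ring. Qed.

Lemma vtx_of_shift (k l m n : int) :
  vtx_of (k + n) (l + n) (m + n) = vtx_of k l m.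
Proof. by rewrite /vtx_of; congr (_, _); ring. Qed.

Lemma pos_triangles_around (z : vtx) :
  pos_triangle (vadd z v_one) (vsub z v_om2) z /\
  pos_triangle (vadd z v_om) (vsub z v_om2) z /\
  pos_triangle (vadd z v_om) (vsub z v_one) z /\
  pos_triangle (vadd z v_om2) (vsub z v_one) z /\
  pos_triangle (vadd z v_om2) (vsub z v_om) z /\
  pos_triangle (vadd z v_one) (vsub z v_om) z.
Proof.
case: z => a b.
rewrite /pos_triangle /is_step /vsub /vadd /v_one /v_om /v_om2 /= !pair_equal_spec.
lia.
Qed.

Section Lattice.
Variables (R : realType) (u v : vtx -> R[i]).
Hypothesis triangles : forall z1 z2 z3 : vtx,
  pos_triangle z1 z2 z3 -> triangle_eq u v z1 z2 z3.

Lemma frac_sums_eq0 (z : vtx) :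
  denom u v z 0 3 != 0 -> denom u v z 2 5 != 0 -> denom u v z 4 1 != 0 ->
  fracU u v z 0 3 + fracU u v z 2 5 + fracU u v z 4 1 = 0 /\
  fracV u v z 0 3 + fracV u v z 2 5 + fracV u v z 4 1 = 0.
Proof.
have [T0 [T1 [T2 [T3 [T4 T5]]]]] := pos_triangles_around z.
have E0 := cleared_ratio_eq (triangles T0).
have E1 := cleared_ratio_eq (triangles T1).
have E2 := cleared_ratio_eq (triangles T2).
have E3 := cleared_ratio_eq (triangles T3).
have E4 := cleared_ratio_eq (triangles T4).
have E5 := cleared_ratio_eq (triangles T5).
move=> D0 D2 D4; split; first exact: star_sumU_eq0 E0 E1 E2 E3 E4 E5 D0 D2 D4.
by have := star_sumV_eq0 E0 E1 E2 E3 E4 E5 D0 D2 D4; rewrite !mulrA.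
Qed.

End Lattice.

Theorem proposition15 (R : realType) (u v : vtx -> R[i]) (alpha beta : R[i]) :
  (forall z1 z2 z3 : vtx, pos_triangle z1 z2 z3 -> triangle_eq u v z1 z2 z3) ->
  forall k l m n : int,
    let z := vtx_of k l m in
    denom u v z 0 3 != 0 -> denom u v z 2 5 != 0 -> denom u v z 4 1 != 0 ->
    (vtx_of (k + n) (l + n) (m + n) = z) /\
    (alpha * u z = rhsU u v k l m <->
       alpha * u z = rhsU u v (k + n) (l + n) (m + n)) /\
    (beta * v z = rhsV u v k l m <->
       beta * v z = rhsV u v (k + n) (l + n) (m + n)) /\
    rhsU u v (k + n) (l + n) (m + n) = rhsU u v k l m /\
    rhsV u v (k + n) (l + n) (m + n) = rhsV u v k l m.
Proof.
move=> triangles k l m n z D0 D2 D4.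
have [sumU sumV] := frac_sums_eq0 triangles D0 D2 D4.
have shiftU : rhsU u v (k + n) (l + n) (m + n) = rhsU u v k l m.
  by rewrite /rhsU /= vtx_of_shift intr_shift_sum sumU mulr0 addr0.
have shiftV : rhsV u v (k + n) (l + n) (m + n) = rhsV u v k l m.
  by rewrite /rhsV /= vtx_of_shift intr_shift_sum sumV mulr0 addr0.
by rewrite shiftU shiftV vtx_of_shift.
Qed.
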